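(* For integers $n\ge1$ and $1\le k\le n$ define $X^{n,k}(z,\bar z)=\frac{1}{k!}\frac{\partial^{k-1}}{\partial z^{k-1}}\big[z^{n-k}(1-z\bar z)^k\big]$ ($z,\bar z$ treated as independent variables). Then $$\frac{\partial X^{n,k}}{\partial z}=Z^{n,k},\qquad \frac{\partial X^{n,k}}{\partial \bar z}=-Z^{n,k-1},\qquad X^{n,k}=\frac1k\big(Z^{n-1,k-1}-\bar z\,Z^{n,k-1}\big),$$ and $X^{n,k}(t,\bar t)=0$ for all $|t|=1$.
   Context: Identify $\mathbb R^2$ with $\mathbb C$ via $z=x^1+ix^2$, $\bar z=x^1-ix^2$, with Wirtinger derivatives $\frac{\partial}{\partial z}=\frac12\big(\frac{\partial}{\partial x^1}-i\frac{\partial}{\partial x^2}\big)$, $\frac{\partial}{\partial \bar z}=\frac12\big(\frac{\partial}{\partial x^1}+i\frac{\partial}{\partial x^2}\big)$. Zernike polynomials (in the paper's numbering) are defined for integers $n\ge 0$, $0\le k\le n$ by $$Z^{n,k}(z,\bar z)=\sum_{s=0}^{k}\binom{k}{s}\binom{n-k}{s}z^{n-k-s}(1-z\bar z)^s(-\bar z)^{k-s}\quad\text{for }0\le k\le [n/2],$$ and $Z^{n,k}=(-1)^n\,\overline{Z^{n,n-k}}$ for $[n/2]<k\le n$, where $[\cdot]$ is the integer part. *)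

(* Polynomials in two independent commuting variables z, zbar
   over a numeric algebraically closed field C (e.g. the complex numbers),
   represented as {poly {poly C}}: the outer variable is z, the inner one zbar. *)
From HB Require Import structures.
From mathcomp Require Import all_boot all_order all_algebra.
Set Implicit Arguments. Unset Strict Implicit. Unset Printing Implicit Defensive.
Import Order.TTheory GRing.Theory Num.Theory.
Local Open Scope ring_scope.

Section Zernike.
Variable C : numClosedFieldType.

Definition zv : {poly {poly C}} := 'X.
Definition zbv : {poly {poly C}} := ('X : {poly C})%:P.

Definition dz (p : {poly {poly C}}) : {poly {poly C}} := p^`().
Definition dzb (p : {poly {poly C}}) : {poly {poly C}} :=
  map_poly (fun q : {poly C} => q^`()) p.

Definition conjP (p : {poly {poly C}}) : {poly {poly C}} :=
  swapXY (map_poly (map_poly Num.conj) p).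

Definition eval2 (p : {poly {poly C}}) (x y : C) : C :=
  (map_poly (fun q : {poly C} => q.[y]) p).[x].

Definition Zsum (n k : nat) : {poly {poly C}} :=
  \sum_(s < k.+1) ('C(k, s) * 'C(n - k, s))%:R
      * zv ^+ (n - k - s) * (1 - zv * zbv) ^+ s * (- zbv) ^+ (k - s).

Definition Zern (n k : nat) : {poly {poly C}} :=
  if (k <= n./2)%N then Zsum n k
  else (-1) ^+ n * conjP (Zsum n (n - k)).

Definition Xpol (n k : nat) : {poly {poly C}} :=
  ((k`!)%:R^-1 : C)%:P%:P * (zv ^+ (n - k) * (1 - zv * zbv) ^+ k)^`(k.-1).

End Zernike.

(* The explicit sum is a Rodrigues formula: by Leibniz' rule,
   k! Zsum n k = d^k/dz^k [z^(n-k) (1 - z zbar)^k].  Exchanging z and zbar maps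
   Zsum n k to (-1)^n Zsum n (n-k), and Zsum has integer coefficients, so the
   conjugation in the definition of Zern for k > n/2 gives Zsum back:
   Zern n k = Zsum n k for all k <= n.  The three identities for X^{n,k} then
   follow from d/dzbar [z^m (1 - z zbar)^j] = -j z^(m+1) (1 - z zbar)^(j-1) and
   (1 - z zbar)^(j+1) = (1 - z zbar)^j - zbar z (1 - z zbar)^j.  Finally, a
   (k-1)-th z-derivative of a multiple of (1 - z zbar)^k is still a multiple of
   1 - z zbar, which vanishes at (t, conj t) when |t| = 1. *)
From HB Require Import structures.
From mathcomp Require Import all_boot all_order all_algebra.
From mathcomp Require Import ring zify.
Set Implicit Arguments.
Unset Strict Implicit.
Unset Printing Implicit Defensive.

Import Order.TTheory GRing.Theory Num.Theory.
Local Open Scope ring_scope.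

Section PolyDerivn.
Variable R : comNzRingType.
Implicit Types p q : {poly R}.

Lemma derivnM p q n :
  (p * q)^`(n) = \sum_(i < n.+1) p^`(n - i) * q^`(i) *+ 'C(n, i).
Proof.
elim: n => [|n IHn]; first by rewrite big_ord1.
pose T i := p^`(n.+1 - i) * q^`(i).
have derivT i : (i < n.+1)%N -> (p^`(n - i) * q^`(i))^`() = T i + T i.+1.
  by move=> lt_in; rewrite derivM -!derivnS /T subSn.
rewrite derivnS IHn raddf_sum /=.
under eq_bigr => i _ do rewrite derivMn derivT // mulrnDl.
rewrite big_split /= -/(T 0%N) [in RHS]big_ord_recl /=.
under [in RHS]eq_bigr do rewrite binS mulrnDr.
rewrite big_split /= big_ord_recl /= addrA !bin0; congr (_ + _).
by rewrite [in RHS]big_ord_recr /= bin_small // mulr0n addr0.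
Qed.

Lemma derivn_exp_linear q c : q^`() = c%:P ->
  forall k j, (q ^+ k)^`(j) = (c ^+ j)%:P * q ^+ (k - j) *+ k ^_ j.
Proof.
move=> dq k j; elim: j => [|j IHj]; first by rewrite derivn0 expr0 mul1r subn0.
rewrite derivnS IHj derivMn derivM derivC mul0r add0r deriv_exp dq.
rewrite ffactnSr mulrnA -subnS exprSr polyCM; ring.
Qed.

Lemma derivn_mul_exp_dvd p q k i : (i <= k)%N ->
  exists r, (p * q ^+ k)^`(i) = q ^+ (k - i) * r.
Proof.
elim: i => [|i IHi] le_ik; first by exists p; rewrite derivn0 subn0 mulrC.
rewrite derivnS; have [r ->] := IHi (ltnW le_ik).
exists (q^`() * r *+ (k - i) + q * r^`()).
rewrite derivM deriv_exp -(subnSK le_ik) /= exprS; ring.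
Qed.
End PolyDerivn.

Section Zernike.
Variable C : numClosedFieldType.
Implicit Types p : {poly {poly C}}.
Local Notation z := (zv C).
Local Notation w := (zbv C).
Local Notation P := (1 - zv C * zbv C).

Lemma deriv_P : P^`() = (- 'X)%:P.
Proof.
by rewrite derivB derivC derivM derivX derivC mulr0 addr0 mul1r sub0r rmorphN.
Qed.

Lemma derivn_zbvM p j : (w * p)^`(j) = w * p^`(j).
Proof. by rewrite /zbv !mul_polyC derivnZ. Qed.

Lemma deriv_zbvXM m p : (w ^+ m * p)^`() = w ^+ m * p^`().
Proof. by rewrite /zbv -rmorphXn deriv_mulC. Qed.

Lemma swapXY_zv : swapXY z = w.
Proof. exact: swapXY_X. Qed.

Lemma swapXY_zbv : swapXY w = z.
Proof. exact: swapXY_Y. Qed.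

Lemma swapXY_P : swapXY P = P.
Proof. by rewrite rmorphB rmorph1 rmorphM /= swapXY_zv swapXY_zbv mulrC. Qed.

Definition Zterm (n k s : nat) : {poly {poly C}} :=
  ('C(k, s) * 'C(n - k, s))%:R * z ^+ (n - k - s) * P ^+ s * (- w) ^+ (k - s).

Lemma ffact_bin_fact m k s : (s <= k)%N ->
  (k ^_ (k - s) * m ^_ s * 'C(k, s) = 'C(k, s) * 'C(m, s) * k`!)%N.
Proof.
move=> le_sk; rewrite -(ffact_fact (leq_subr s k)) subKn // -(bin_ffact m s).
ring.
Qed.

Lemma Zsum_Rodrigues n k : (z ^+ (n - k) * P ^+ k)^`(k) = Zsum C n k *+ k`!.
Proof.
rewrite mulrC derivnM /Zsum -sumrMnl; apply: eq_bigr => -[s /= lt_sk] _.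
have le_sk : (s <= k)%N by rewrite -ltnS.
rewrite (derivn_exp_linear deriv_P) derivnXn subKn // rmorphXn rmorphN /=.
rewrite mulrnAr mulrnAl -!mulrnA mulnA ffact_bin_fact // -/(zbv C); ring.
Qed.

Lemma Zsum_widen n k N : (k <= N)%N ->
  Zsum C n k = \sum_(s < N.+1) Zterm n k s.
Proof.
move=> le_kN; rewrite [LHS]/Zsum -/(Zterm n k _).
rewrite (big_ord_widen N.+1 (Zterm n k)) // big_mkcond /=.
apply: eq_bigr => s _; case: ltnP => // lt_ks.
by rewrite /Zterm bin_small // mul0n !mul0r.
Qed.

Lemma sign_complement (R : pzRingType) n k s : (s <= k)%N -> (k + s <= n)%N ->
  (-1) ^+ (k - s) = (-1) ^+ n * (-1) ^+ (n - k - s) :> R.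
Proof.
move=> le_sk le_ksn; rewrite -exprD.
have -> : (n + (n - k - s) = (k - s) + (n - k) * 2)%N by lia.
by rewrite exprD exprM sqrr_sign mulr1.
Qed.

Lemma Zterm_swapXY n k s : (k <= n)%N ->
  swapXY (Zterm n k s) = (-1) ^+ n * Zterm n (n - k) s.
Proof.
move=> le_kn; rewrite /Zterm subKn //.
have [lt_ks | le_sk] := ltnP k s.
  by rewrite (bin_small lt_ks) !(mul0n, muln0, mul0r, mulr0, raddf0).
have [lt_nks | le_snk] := ltnP (n - k) s.
  by rewrite (bin_small lt_nks) !(mul0n, muln0, mul0r, mulr0, raddf0).
rewrite !(rmorph_nat, rmorphM, rmorphXn, rmorphN) /=.
rewrite swapXY_P swapXY_zv swapXY_zbv.
have le_ksn : (k + s <= n)%N by lia.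
rewrite [(- z) ^+ _]exprNn [(- w) ^+ _]exprNn (sign_complement _ le_sk le_ksn).
ring.
Qed.

Lemma Zsum_swapXY n k : (k <= n)%N ->
  swapXY (Zsum C n k) = (-1) ^+ n * Zsum C n (n - k).
Proof.
move=> le_kn; rewrite (Zsum_widen n le_kn) (Zsum_widen n (leq_subr k n)).
by rewrite rmorph_sum mulr_sumr; apply: eq_bigr => s _; apply: Zterm_swapXY.
Qed.

Lemma conjP_Zsum n k : conjP (Zsum C n k) = swapXY (Zsum C n k).
Proof.
congr swapXY; rewrite rmorph_sum; apply: eq_bigr => s _.
rewrite !(rmorph_nat, rmorphM, rmorphXn, rmorphB, rmorphN, rmorph1) /=.
by rewrite /zv /zbv map_polyX map_polyC /= map_polyX.
Qed.

Lemma Zern_Zsum n k : (k <= n)%N -> Zern C n k = Zsum C n k.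
Proof.
move=> le_kn; rewrite /Zern; case: ifP => // _.
rewrite conjP_Zsum Zsum_swapXY ?leq_subr // subKn //.
by rewrite mulrA -expr2 sqrr_sign mul1r.
Qed.

Lemma dzbE p : dzb p = swapXY (swapXY p)^`().
Proof.
apply/polyP => i; apply/polyP => j.
by rewrite coef_swapXY /dzb coef_map /= !coef_deriv coefMn coef_swapXY.
Qed.

Lemma dzb_mulC (c : C) p : dzb (c%:P%:P * p) = c%:P%:P * dzb p.
Proof.
by rewrite !dzbE rmorphM /= swapXY_polyC map_polyC /= deriv_mulC rmorphM /=
  swapXY_polyC map_polyC.
Qed.

Lemma dzb_derivn p j : dzb p^`(j) = (dzb p)^`(j).
Proof.
elim: j => [|j IHj]; first by rewrite !derivn0.
rewrite !derivnS -IHj; apply/polyP => i.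
by rewrite /dzb coef_map /= !coef_deriv coef_map /= derivMn.
Qed.

Lemma dzb_zexp_Pexp m j :
  dzb (z ^+ m * P ^+ j) = - (z ^+ m.+1 * P ^+ j.-1) *+ j.
Proof.
rewrite dzbE -[RHS]swapXYK; congr swapXY.
rewrite !(rmorphM, rmorphXn, rmorphMn, rmorphN) /= swapXY_P swapXY_zv.
rewrite deriv_zbvXM deriv_exp deriv_P rmorphN /= -/(zbv C).
by rewrite mulNr mulrnAr mulrN mulrA -exprSr.
Qed.

Lemma eval2E p x y : eval2 p x y = horner_eval x (map_poly (horner_eval y) p).
Proof. by []. Qed.

Lemma eval2M p q x y : eval2 (p * q) x y = eval2 p x y * eval2 q x y.
Proof. by rewrite !eval2E !rmorphM. Qed.

Lemma eval2_P x y : eval2 P x y = 1 - x * y.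
Proof.
rewrite eval2E !(rmorphB, rmorph1, rmorphM) /= /zv /zbv map_polyX map_polyC /=.
by rewrite !horner_evalE hornerC !hornerX.
Qed.

Lemma invfact_mulrnK p m : ((m`!)%:R^-1 : C)%:P%:P * (p *+ m`!) = p.
Proof.
rewrite mulrnAr -mulrnAl -!polyCMn -(mulr_natr (_^-1)) mulVf ?mul1r //.
by rewrite pnatr_eq0 -lt0n fact_gt0.
Qed.

Lemma invfactS_mulrn p m :
  (((m.+1)`!)%:R^-1 : C)%:P%:P * (p *+ m`!) = ((m.+1)%:R^-1 : C)%:P%:P * p.
Proof. by rewrite factS natrM invfM !polyCM -mulrA invfact_mulrnK. Qed.

Lemma mulrX_subr_mulS (R : comPzRingType) (a b : R) m j :
  a ^+ m * (1 - a * b) ^+ j.+1 =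
  a ^+ m * (1 - a * b) ^+ j - b * (a ^+ m.+1 * (1 - a * b) ^+ j).
Proof. by rewrite exprS exprSr; ring. Qed.

Lemma XpolSS n k : Xpol C n.+1 k.+1 =
  (((k.+1)`!)%:R^-1 : C)%:P%:P * (z ^+ (n - k) * P ^+ k.+1)^`(k).
Proof. by rewrite /Xpol subSS. Qed.

Lemma dz_Xpol n k : (k <= n)%N -> dz (Xpol C n.+1 k.+1) = Zern C n.+1 k.+1.
Proof.
move=> le_kn; rewrite XpolSS /dz deriv_mulC -derivnS -(subSS k n).
by rewrite Zsum_Rodrigues invfact_mulrnK Zern_Zsum.
Qed.

Lemma dzb_Xpol n k : (k <= n)%N -> dzb (Xpol C n.+1 k.+1) = - Zern C n.+1 k.
Proof.
move=> le_kn; rewrite XpolSS dzb_mulC dzb_derivn dzb_zexp_Pexp -subSn //.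
rewrite derivnMn derivnN Zsum_Rodrigues -mulNrn -mulrnA mulnC -factS.
by rewrite invfact_mulrnK Zern_Zsum // leqW.
Qed.

Lemma Xpol_Zern n k : (k <= n)%N ->
  Xpol C n.+1 k.+1 =
    ((k.+1)%:R^-1 : C)%:P%:P * (Zern C n k - w * Zern C n.+1 k).
Proof.
move=> le_kn; rewrite XpolSS !Zern_Zsum ?leqW // mulrX_subr_mulS.
rewrite derivnB derivn_zbvM -subSn // !Zsum_Rodrigues.
by rewrite mulrnAr -mulrnBl invfactS_mulrn.
Qed.

Lemma eval2_Xpol_circle n k t : `|t| = 1 -> eval2 (Xpol C n k.+1) t t^* = 0.
Proof.
move=> t1; rewrite /Xpol /=.
have [r ->] := derivn_mul_exp_dvd (z ^+ (n - k.+1)) P (leqnSn k).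
rewrite /= eval2M subSnn expr1 eval2M eval2_P -normCK t1 expr1n subrr.
by rewrite mul0r mulr0.
Qed.
End Zernike.

Theorem mainTheorem4 (C : numClosedFieldType) (n k : nat) :
  (1 <= n)%N -> (1 <= k <= n)%N ->
  [/\ dz (Xpol C n k) = Zern C n k,
      dzb (Xpol C n k) = - Zern C n k.-1,
      Xpol C n k = ((k%:R)^-1 : C)%:P%:P
                     * (Zern C n.-1 k.-1 - zbv C * Zern C n k.-1)
    & forall t : C, `|t| = 1 -> eval2 (Xpol C n k) t (Num.conj t) = 0].
Proof.
case: n => [//|n] _; case: k => [//|k] /= le_kn.
split; [exact: dz_Xpol | exact: dzb_Xpol | exact: Xpol_Zern |].
exact: eval2_Xpol_circle.
Qed.
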